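(* Let $\sigma$ be any argumentation semantics whose extensions are maximal conflict-free sets (w.r.t. set inclusion), and let $AF=(AR,Attacks)$, $AF'=(AR',Attacks')$ be argumentation frameworks with $AF\preceq_N AF'$. Let $UE'_{new}=\bigcup_{E'\in\sigma(AF')}(E'\setminus AR)$. Then for every $E\in\sigma(AF)$: if the implication $$\{(a,b)\in Attacks' : a\in UE'_{new},\ b\in E\}=\emptyset\ \Longrightarrow\ \exists E'\in\sigma(AF') \text{ with } E\subseteq E'$$ holds, then there exists $E'\in\sigma(AF')$ with $E'\not\subseteq AR$ or $E'=E$.
   Context: An argumentation framework is a pair $(AR,Attacks)$ with $AR$ a finite set and $Attacks\subseteq AR\times AR$; $a$ attacks $b$ iff $(a,b)\in Attacks$. A set $S$ is conflict-free iff no element of $S$ attacks an element of $S$. An argumentation semantics $\sigma$ assigns to each argumentation framework a set $\sigma(AF)$ of subsets of $AR$; ''$\sigma$'s extensions are maximal conflict-free sets'' means that for every $AF$, every $E\in\sigma(AF)$ is a $\subseteq$-maximal conflict-free subset of the argument set of $AF$. $AF\preceq_N AF'$ (normal expansion) iff $AR\subseteq AR'$, $Attacks\subseteq Attacks'$ and no $(a,b)\in Attacks'\setminus Attacks$ has both $a,b\in AR$. *)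

From mathcomp Require Import all_boot.
Set Implicit Arguments. Unset Strict Implicit. Unset Printing Implicit Defensive.

(* An argumentation framework over a finite universe U of potential arguments:
   a finite set of arguments AR : {set U} and an attack relation
   Att : {set U * U}, with (a,b) \in Att meaning "a attacks b". *)

Definition wf_af (U : finType) (AR : {set U}) (Att : {set (U * U)}) : bool :=
  Att \subset setX AR AR.

Definition conflict_free (U : finType) (Att : {set (U * U)}) (S : {set U}) : bool :=
  [forall a in S, forall b in S, (a, b) \notin Att].

Definition max_conflict_free (U : finType) (AR : {set U}) (Att : {set (U * U)})
  (E : {set U}) : Prop :=
  maxset [pred S : {set U} | (S \subset AR) && conflict_free Att S] E.

Definition semantics (U : finType) := {set U} -> {set (U * U)} -> {set {set U}}.

Definition extensions_max_cf (U : finType) (sigma : semantics U) : Prop :=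
  forall (AR : {set U}) (Att : {set (U * U)}), wf_af AR Att ->
    forall E, E \in sigma AR Att -> max_conflict_free AR Att E.

Definition normal_expansion (U : finType) (AR : {set U}) (Att : {set (U * U)})
  (AR' : {set U}) (Att' : {set (U * U)}) : Prop :=
  [/\ AR \subset AR', Att \subset Att' &
      forall a b, (a, b) \in Att' :\: Att -> ~ (a \in AR /\ b \in AR)].

Definition UE_new (U : finType) (sigma : semantics U) (AR AR' : {set U})
  (Att' : {set (U * U)}) : {set U} :=
  \bigcup_(E' in sigma AR' Att') (E' :\: AR).

From mathcomp Require Import all_boot.

Set Implicit Arguments.
Unset Strict Implicit.
Unset Printing Implicit Defensive.

(* If some extension of AF' contains an argument outside AR we are done.
   Otherwise UE'_new is empty, so the premise of the implication holds and
   yields E' in sigma(AF') with E <= E'.  Then E' lies in AR and is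
   conflict-free for Attacks' >= Attacks, hence conflict-free in AF, and the
   maximality of E forces E' = E. *)

Lemma conflict_freeS (U : finType) (Att Att' : {set (U * U)}) (S : {set U}) :
  Att \subset Att' -> conflict_free Att' S -> conflict_free Att S.
Proof.
move=> sAtt /forall_inP cfS; apply/forall_inP => a aS; apply/forall_inP => b bS.
by apply: contra (forall_inP (cfS a aS) b bS); apply: (subsetP sAtt).
Qed.

Lemma max_conflict_free_supset_eq (U : finType) (AR : {set U})
  (Att Att' : {set (U * U)}) (E E' : {set U}) :
  max_conflict_free AR Att E -> Att \subset Att' ->
  E' \subset AR -> conflict_free Att' E' -> E \subset E' -> E' = E.
Proof.
move=> /maxsetP [_ maxE] sAtt sE'AR cfE' sEE'; apply: maxE sEE'.
by rewrite inE /= sE'AR (conflict_freeS sAtt cfE').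
Qed.

Lemma UE_new_eq0 (U : finType) (sigma : semantics U) (AR AR' : {set U})
  (Att' : {set (U * U)}) :
  (forall E', E' \in sigma AR' Att' -> E' \subset AR) ->
  UE_new sigma AR AR' Att' = set0.
Proof.
move=> oldE'; apply/eqP; rewrite -subset0; apply/bigcupsP => E' /oldE'.
by rewrite subset0 setD_eq0.
Qed.

Theorem proposition31 (U : finType) (sigma : semantics U)
  (AR : {set U}) (Att : {set (U * U)}) (AR' : {set U}) (Att' : {set (U * U)}) :
  extensions_max_cf sigma ->
  wf_af AR Att -> wf_af AR' Att' ->
  normal_expansion AR Att AR' Att' ->
  forall E, E \in sigma AR Att ->
    ([set p in Att' | (p.1 \in UE_new sigma AR AR' Att') && (p.2 \in E)] = set0 ->
       exists2 E', E' \in sigma AR' Att' & E \subset E') ->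
    exists2 E', E' \in sigma AR' Att' & (~~ (E' \subset AR) \/ E' = E).
Proof.
move=> sigma_max wf wf' [_ sAtt _] E sigmaE impl.
have [E' /andP [sigmaE' newE'] | noNew] :=
  pickP (fun E' => (E' \in sigma AR' Att') && ~~ (E' \subset AR)).
  by exists E'; [|left].
have oldE' E' : E' \in sigma AR' Att' -> E' \subset AR.
  by move=> sigmaE'; apply/negbFE; have := noNew E'; rewrite sigmaE'.
case: impl => [|E' sigmaE' sEE'].
  by apply/setP => p; rewrite UE_new_eq0 // !inE andbF.
exists E' => //; right.
have /maxsetp /andP [_ cfE'] := sigma_max _ _ wf' E' sigmaE'.
exact: max_conflict_free_supset_eq (sigma_max _ _ wf E sigmaE) sAtt
  (oldE' E' sigmaE') cfE' sEE'.
Qed.
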